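(* The set of spacelike pairs $\{(x,y)\in\mathrm{dS}^d\times\mathrm{dS}^d:\beta(x-y,x-y)<0\}$ coincides with $$\mathrm{SO}_{1,d}(\mathbb R).(W^+\times(-W^+))=\bigcup_{W\in\mathcal W}W\times(-W).$$ For $d>1$ it also coincides with $\mathrm{SO}_{1,d}(\mathbb R)_e.(W^+\times(-W^+))$.
   Context: Let $d\ge1$, $\beta(x,y)=x_0y_0-x_1y_1-\dots-x_dy_d$ on $\mathbb R^{1+d}$, $\mathrm{dS}^d=\{x\in\mathbb R^{1+d}:\beta(x,x)=-1\}$ (de Sitter space). $\mathrm{SO}_{1,d}(\mathbb R)$ (determinant one, preserving $\beta$) acts diagonally on pairs. The canonical wedge is $W^+=\{x\in\mathrm{dS}^d:x_1>|x_0|\}$, and a wedge region is a set $W=g.W^+$ with $g\in\mathrm{SO}_{1,d}(\mathbb R)$; $\mathcal W$ is the set of wedge regions. *)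

From HB Require Import structures.
From mathcomp Require Import all_boot all_order all_algebra.
From mathcomp Require Import all_classical all_reals.
From mathcomp Require Import all_analysis.
Import numFieldNormedType.Exports.
Set Implicit Arguments. Unset Strict Implicit. Unset Printing Implicit Defensive.
Import Order.TTheory GRing.Theory Num.Theory.
Local Open Scope classical_set_scope.
Local Open Scope ring_scope.

Section DeSitter.
Variable R : realType.
Variable d : nat.

Definition vec := 'cV[R]_(d.+1).

Definition beta (x y : vec) : R :=
  \sum_(i < d.+1) (if i == ord0 then 1 else -1) * x i ord0 * y i ord0.

Definition dS : set vec := [set x | beta x x = -1].

Definition SO1d : set 'M[R]_(d.+1) :=
  [set g | \det g = 1 /\ forall x y : vec, beta (g *m x) (g *m y) = beta x y].

Definition SO1d_e : set 'M[R]_(d.+1) := @connected_component 'M[R]_(d.+1) SO1d 1%:M.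

(* canonical wedge W^+ = {x in dS : x_1 > |x_0|}  (index 1 = inord 1, valid as d >= 1) *)
Definition Wplus : set vec :=
  [set x | dS x /\ `|x ord0 ord0| < x (inord 1) ord0].

Definition actset (g : 'M[R]_(d.+1)) (S : set vec) : set vec := [set g *m x | x in S].
Definition negset (S : set vec) : set vec := [set - x | x in S].

Definition wedges : set (set vec) := [set W | exists2 g, SO1d g & W = actset g Wplus].

Definition pair_orbit (G : set 'M[R]_(d.+1)) (S : set (vec * vec)) : set (vec * vec) :=
  [set p | exists g, G g /\ exists2 q, S q & p = (g *m q.1, g *m q.2)].

Definition spacelike_pairs : set (vec * vec) :=
  [set p | dS p.1 /\ dS p.2 /\ beta (p.1 - p.2) (p.1 - p.2) < 0].

End DeSitter.

Arguments beta R d : clear implicits.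
Arguments dS R d : clear implicits.
Arguments SO1d R d : clear implicits.
Arguments SO1d_e R d : clear implicits.
Arguments Wplus R d : clear implicits.
Arguments wedges R d : clear implicits.
Arguments spacelike_pairs R d : clear implicits.

(* A spacelike pair (x, y) of de Sitter points is described by u := x - y, with
   beta(u, u) = -t^2 < 0, and v := x + y, which is beta-orthogonal to u with
   beta(v, v) = t^2 - 4.  A beta-reflection in a spacelike vector maps u onto
   the axis t e_1; a second one, preserving that axis, brings the time
   coordinate of v below |t|.  Then x = (v + u)/2 and y = (v - u)/2 lie in
   W+ x (-W+), or in (-W+) x W+, and in the latter case the element of SO_{1,d}
   negating the coordinates 1 and j (j = 0, or j = 2 when d > 1) repairs the
   sign.  Products of two reflections in spacelike vectors a, c lie in the
   identity component: after replacing c by -c we may assume beta(a, c) <= 0, so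
   the segment from a to c stays spacelike and yields a path to the identity;
   and the identity component of a multiplicatively closed set of matrices is
   itself multiplicatively closed. *)

From HB Require Import structures.
From mathcomp Require Import all_boot all_order all_algebra.
From mathcomp Require Import all_classical all_reals.
From mathcomp Require Import all_analysis.
From mathcomp Require Import ring lra.
Import numFieldNormedType.Exports.
Import Order.TTheory GRing.Theory Num.Theory.
Local Open Scope classical_set_scope.
Local Open Scope ring_scope.

Set Implicit Arguments.
Unset Strict Implicit.
Unset Printing Implicit Defensive.

Section MatrixContinuity.
Variables (R : realType) (T : topologicalType).

Lemma continuous_sum (I : Type) (r : seq I) (F : I -> T -> R) x :
  (forall i, {for x, continuous (F i)}) ->
  {for x, continuous (fun t => \sum_(i <- r) F i t)}.
Proof.
move=> cF; elim: r => [|i r IHr].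
  rewrite (_ : (fun t => _) = cst 0); first exact: cvg_cst.
  by apply: funext => t; rewrite big_nil.
rewrite (_ : (fun t => _) = F i + fun t => \sum_(j <- r) F j t).
  exact: continuousD.
by apply: funext => t; rewrite big_cons.
Qed.

Lemma continuous_mx m n (f : T -> 'M[R]_(m, n)) x :
  (forall i j, {for x, continuous (fun t => f t i j)}) -> {for x, continuous f}.
Proof.
move=> cf A /= [P hP sPA].
apply: (@filterS _ _ _ [set t | forall i j, P i j (f t i j)]) => [t /sPA //|].
apply: (@filter_forall _ _ (fun i t => forall j, P i j (f t i j))) => i.
apply: (@filter_forall _ _ (fun j t => P i j (f t i j))) => j.
exact: cf.
Qed.

Lemma continuous_mxE m n (f : T -> 'M[R]_(m, n)) x i j :
  {for x, continuous f} -> {for x, continuous (fun t => f t i j)}.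
Proof.
move=> cf; have := @continuous_comp _ _ _ f (fun M => M i j) x cf.
by apply; exact: coord_continuous.
Qed.

Lemma continuous_mulmx m n p (f : T -> 'M[R]_(m, n)) (g : T -> 'M[R]_(n, p)) x :
  {for x, continuous f} -> {for x, continuous g} ->
  {for x, continuous (fun t => f t *m g t)}.
Proof.
move=> cf cg; apply: continuous_mx => i j.
rewrite (_ : (fun t => _) = fun t => \sum_k f t i k * g t k j).
  by apply: continuous_sum => k; apply: continuousM; exact: continuous_mxE.
by apply: funext => t; rewrite mxE.
Qed.

End MatrixContinuity.

Lemma connected_component_path (R : realType) (T : topologicalType)
    (S : set T) (phi : R -> T) :
  (forall t, 0 <= t <= 1 -> S (phi t) /\ {for t, continuous phi}) ->
  connected_component S (phi 1) (phi 0).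
Proof.
move=> hphi; apply: (@connected_component_max _ _ (phi @` `[0, 1])).
- by exists 1 => //; rewrite /= in_itv /= ler01 lexx.
- by move=> _ [t + <-]; rewrite /= in_itv => /hphi[].
- apply: connected_continuous_connected; first exact: segment_connected.
  by apply: continuous_in_subspaceT => t; rewrite inE /= in_itv => /hphi[].
- by exists 0 => //; rewrite /= in_itv /= ler01 lexx.
Qed.

Lemma connected_component_mulmx (R : realType) m (S : set 'M[R]_m) g h :
  S 1%:M -> (forall g h, S g -> S h -> S (g *m h)) ->
  connected_component S 1%:M g -> connected_component S 1%:M h ->
  connected_component S 1%:M (g *m h).
Proof.
move=> S1 SM Cg Ch; set C := connected_component S 1%:M in Cg Ch *.
have CS : C `<=` S by exact: connected_component_sub.
apply: (@connected_component_max _ _ (C `|` mulmx g @` C)).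
- by left; exact: connected_component_refl.
- by move=> _ [/CS //|[M /CS SM_ <-]]; exact: SM (CS _ Cg) SM_.
- apply: connectedU; [|exact: component_connected|].
    by exists g; split=> //; exists 1%:M; [exact: connected_component_refl|rewrite mulmx1].
  apply: connected_continuous_connected; first exact: component_connected.
  apply: continuous_subspaceT => M.
  by apply: (@continuous_mulmx R _ m m m (fun _ => g) id); [exact: cst_continuous|].
- by right; exists h.
Qed.

Lemma det1_sub_mulmx (R : comRingType) m (a : 'cV[R]_m) (c : 'rV[R]_m) :
  \det (1%:M - a *m c) = 1 - (c *m a) 0 0.
Proof.
pose M := block_mx (1%:M : 'M[R]_1) c a 1%:M.
have EL : M = block_mx 1%:M 0 a 1%:M *m block_mx 1%:M c 0 (1%:M - a *m c).
  by rewrite mulmx_block !(mul1mx, mulmx0, mul0mx, mulmx1, addr0, add0r) addrC subrK.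
have ER : M = block_mx 1%:M c 0 1%:M *m block_mx (1%:M - c *m a) 0 a 1%:M.
  by rewrite mulmx_block !(mul1mx, mulmx0, mul0mx, mulmx1, addr0, add0r) subrK.
have := congr1 determinant EL; rewrite ER !det_mulmx !det_lblock !det_ublock.
by rewrite !det1 !(mul1r, mulr1) det_mx11 !mxE eqxx => <-.
Qed.

Lemma mulmx_ext (R : ringType) m n (A B : 'M[R]_(m, n)) :
  (forall z : 'cV[R]_n, A *m z = B *m z) -> A = B.
Proof.
move=> AB; apply/matrixP => i j.
by have := congr1 (fun z : 'cV_m => z i 0) (AB (delta_mx j 0)); rewrite -!colE !mxE.
Qed.

Lemma exists_pos_lt_sqr_ge (R : rcfType) (B k : R) : 0 < k -> B < k ^+ 2 ->
  exists2 c, 0 < c < k & B <= c ^+ 2.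
Proof.
move=> k0 Bk; have sB0 := sqrtr_ge0 B.
have sBk : Num.sqrt B < k by rewrite -[k]gtr0_norm // -sqrtr_sqr ltr_sqrt // exprn_gt0.
exists ((Num.sqrt B + k) / 2); first by apply/andP; split; lra.
have [B0|/ltW B0] := leP 0 B; last exact: le_trans B0 (sqr_ge0 _).
rewrite -{1}(sqr_sqrtr B0) lerXn2r ?nnegrE ?sqrtr_ge0 //; lra.
Qed.

Section Lorentz.
Variables (R : realType) (d : nat).
Local Notation vec := 'cV[R]_d.+1.
Local Notation b := (beta R d).
Implicit Types (x y z u v w : vec).

Definition msign (i : 'I_d.+1) : R := if i == ord0 then 1 else -1.

Lemma betaE x y : b x y = \sum_i msign i * x i 0 * y i 0.
Proof. by []. Qed.

Lemma betaC x y : b x y = b y x.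
Proof. by rewrite !betaE; apply: eq_bigr => i _; ring. Qed.

Lemma betaDl x y z : b (x + y) z = b x z + b y z.
Proof. by rewrite !betaE -big_split /=; apply: eq_bigr => i _; rewrite !mxE; ring. Qed.

Lemma betaZl a x z : b (a *: x) z = a * b x z.
Proof. by rewrite !betaE mulr_sumr; apply: eq_bigr => i _; rewrite !mxE; ring. Qed.

Lemma betaNl x z : b (- x) z = - b x z.
Proof. by rewrite -scaleN1r betaZl mulN1r. Qed.

Lemma betaBl x y z : b (x - y) z = b x z - b y z.
Proof. by rewrite betaDl betaNl. Qed.

Lemma betaDr x y z : b z (x + y) = b z x + b z y.
Proof. by rewrite betaC betaDl !(betaC z). Qed.

Lemma betaZr a x z : b z (a *: x) = a * b z x.
Proof. by rewrite betaC betaZl betaC. Qed.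

Lemma betaNr x z : b z (- x) = - b z x.
Proof. by rewrite betaC betaNl betaC. Qed.

Lemma betaBr x y z : b z (x - y) = b z x - b z y.
Proof. by rewrite betaC betaBl !(betaC z). Qed.

Lemma betaBB x y : b (x - y) (x - y) = b x x - 2 * b x y + b y y.
Proof. by rewrite betaBl !betaBr (betaC y x); ring. Qed.

Lemma beta_recl x y : b x y =
  x ord0 0 * y ord0 0 - \sum_(i < d) x (lift ord0 i) 0 * y (lift ord0 i) 0.
Proof.
rewrite betaE big_ord_recl /msign eqxx mul1r -sumrN; congr (_ + _).
by apply: eq_bigr => i _; rewrite lift_eqF; ring.
Qed.

Lemma beta_delta_r x i : b x (delta_mx i 0) = msign i * x i 0.
Proof.
rewrite betaE (bigD1 i) //= big1 => [|j /negbTE ji]; first by rewrite !mxE eqxx mulr1 addr0.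
by rewrite !mxE ji mulr0.
Qed.

Lemma beta_delta_l x i : b (delta_mx i 0) x = msign i * x i 0.
Proof. by rewrite betaC beta_delta_r. Qed.

Lemma beta_delta i : b (delta_mx i 0) (delta_mx i 0) = msign i.
Proof. by rewrite beta_delta_r mxE !eqxx mulr1. Qed.

Lemma msign_spatial i : i != ord0 -> msign i = -1.
Proof. by rewrite /msign => /negbTE ->. Qed.

Lemma msign_neq0 i : msign i != 0.
Proof. by rewrite /msign; case: ifP; rewrite ?oppr_eq0 oner_eq0. Qed.

Lemma beta_delta_lt0 j : j != ord0 -> b (delta_mx j 0) (delta_mx j 0) < 0.
Proof. by move=> j0; rewrite beta_delta msign_spatial // ltrN10. Qed.

(* The beta-reflection fixing the beta-orthogonal complement of v; for a null v
   the junk value 2 / 0 = 0 makes it the identity. *)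
Definition refl_mx (v : vec) : 'M[R]_d.+1 :=
  1%:M - (2 / b v v) *: (v *m \row_j (msign j * v j 0)).

Lemma refl_mxE v z : refl_mx v *m z = z - (2 / b v v * b v z) *: v.
Proof.
rewrite mulmxBl mul1mx -scalemxAl -mulmxA; congr (_ - _).
suff -> : \row_j (msign j * v j 0) *m z = (b v z)%:M by rewrite mul_mx_scalar scalerA.
by apply/matrixP => i k; rewrite !ord1 !mxE eqxx mulr1n; apply: eq_bigr => l _; rewrite mxE.
Qed.

Lemma refl_mx_entry v i j :
  refl_mx v i j = (i == j)%:R - 2 / b v v * (v i 0 * (msign j * v j 0)).
Proof. by rewrite !mxE big_ord1 !mxE. Qed.

Lemma refl_mx_fix v z : b v z = 0 -> refl_mx v *m z = z.
Proof. by move=> vz; rewrite refl_mxE vz mulr0 scale0r subr0. Qed.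

Lemma refl_mx_self v : b v v != 0 -> refl_mx v *m v = - v.
Proof. by move=> vv; rewrite refl_mxE mulfVK // scaler_nat mulr2n opprD addNKr. Qed.

Lemma refl_mx_beta v x y : b v v != 0 ->
  b (refl_mx v *m x) (refl_mx v *m y) = b x y.
Proof.
by move=> vv; rewrite !refl_mxE !betaBl !betaBr !betaZl !betaZr (betaC x v); field.
Qed.

Lemma refl_mxK v : b v v != 0 -> refl_mx v *m refl_mx v = 1%:M.
Proof.
move=> vv; apply: mulmx_ext => z; rewrite mul1mx -mulmxA [refl_mx v *m z]refl_mxE.
by rewrite mulmxBr -scalemxAr refl_mx_self // refl_mxE scalerN opprK subrK.
Qed.

Lemma refl_mxKl v m (M : 'M[R]_(d.+1, m)) : b v v != 0 ->
  refl_mx v *m (refl_mx v *m M) = M.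
Proof. by move=> vv; rewrite mulmxA refl_mxK // mul1mx. Qed.

Lemma refl_mxN v : refl_mx (- v) = refl_mx v.
Proof. by apply/matrixP => i j; rewrite !refl_mx_entry betaNl betaNr opprK !mxE; ring. Qed.

Lemma refl_mx_swap x y : b x x = b y y -> b (x - y) (x - y) != 0 ->
  refl_mx (x - y) *m x = y.
Proof.
move=> xy nxy; rewrite refl_mxE.
suff -> : 2 / b (x - y) (x - y) * b (x - y) x = 1 by rewrite scale1r opprB addrC subrK.
by move: nxy; rewrite betaBB betaBl (betaC y x) -xy => nxy; field.
Qed.

Lemma refl_mx_deltaE j z i :
  (refl_mx (delta_mx j 0) *m z) i 0 = if i == j then - z i 0 else z i 0.
Proof.
rewrite refl_mxE beta_delta beta_delta_l mulrA mulfVK ?msign_neq0 // !mxE.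
by case: eqP => [->|]; rewrite ?mulr1 ?mulr0 ?subr0 //; ring.
Qed.

Lemma det_refl_mx v : b v v != 0 -> \det (refl_mx v) = -1.
Proof.
move=> vv; rewrite /refl_mx scalemxAl det1_sub_mulmx -scalemxAr mxE.
rewrite (_ : (_ *m v) 0 0 = b v v) ?mulfVK //; first lra.
by rewrite !mxE; apply: eq_bigr => i _; rewrite !mxE.
Qed.

Local Notation SO := (SO1d R d).

Lemma SO1d1 : SO 1%:M.
Proof. by split=> [|x y]; rewrite ?det1 ?mul1mx. Qed.

Lemma SO1d_mul g h : SO g -> SO h -> SO (g *m h).
Proof.
move=> [dg bg] [dh bh]; split=> [|x y]; first by rewrite det_mulmx dg dh mulr1.
by rewrite -!mulmxA bg bh.
Qed.

Lemma refl_mx2_SO u v : b u u != 0 -> b v v != 0 -> SO (refl_mx u *m refl_mx v).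
Proof.
move=> uu vv; split=> [|x y]; first by rewrite det_mulmx !det_refl_mx // mulrNN mulr1.
by rewrite -!mulmxA !refl_mx_beta.
Qed.

Section Continuity.
Variable T : topologicalType.

Lemma continuous_beta (f g : T -> vec) t :
  {for t, continuous f} -> {for t, continuous g} ->
  {for t, continuous (fun s => b (f s) (g s))}.
Proof.
move=> cf cg; rewrite (_ : (fun s => _) = fun s => \sum_i msign i * f s i 0 * g s i 0) //.
apply: continuous_sum => i; apply: continuousM; last exact: continuous_mxE.
by apply: continuousM; [exact: cst_continuous|exact: continuous_mxE].
Qed.

Lemma continuous_refl_mx (f : T -> vec) t :
  {for t, continuous f} -> b (f t) (f t) != 0 ->
  {for t, continuous (fun s => refl_mx (f s))}.
Proof.
move=> cf ff; apply: continuous_mx => i j.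
rewrite (_ : (fun s => _) = fun s => (i == j)%:R -
    2 / b (f s) (f s) * (f s i 0 * (msign j * f s j 0))).
  2: by apply: funext => s; rewrite refl_mx_entry.
apply: continuousB; first exact: cst_continuous.
apply: continuousM; first apply: continuousM; first exact: cst_continuous.
  by apply: (@continuousV _ _ (fun s => b (f s) (f s))) => //; exact: continuous_beta.
apply: continuousM; first exact: continuous_mxE.
by apply: continuousM; [exact: cst_continuous|exact: continuous_mxE].
Qed.

End Continuity.

Lemma beta_segment_lt0 x y t : b x x < 0 -> b y y < 0 -> b x y <= 0 ->
  0 <= t <= 1 -> b ((1 - t) *: x + t *: y) ((1 - t) *: x + t *: y) < 0.
Proof.
move=> xx yy xy /andP[t0 t1].
rewrite !betaDl !betaDr !betaZl !betaZr (betaC y x).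
have cross : (1 - t) * t * b x y <= 0 by apply: mulr_ge0_le0 => //; nra.
have [->|t_gt0] := eqVneq t 0; first by rewrite subr0 !(mul1r, mul0r) !addr0.
have tt : t * t * b y y < 0.
  by rewrite pmulr_rlt0 // mulr_gt0 // lt_neqAle eq_sym t_gt0.
have : (1 - t) * (1 - t) * b x x <= 0 by apply: mulr_ge0_le0 (ltW xx); nra.
nra.
Qed.

Lemma refl_mx2_SOe x y : b x x < 0 -> b y y < 0 ->
  SO1d_e R d (refl_mx x *m refl_mx y).
Proof.
wlog xy : y / b x y <= 0 => [wlog_le xx yy|xx yy].
  have [xy|/ltW yx] := lerP (b x y) 0; first exact: wlog_le.
  by rewrite -[refl_mx y]refl_mxN; apply: wlog_le; rewrite ?betaNl ?betaNr ?opprK ?oppr_le0.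
pose seg t := (1 - t) *: x + t *: y.
have seg_lt0 t : 0 <= t <= 1 -> b (seg t) (seg t) < 0 by exact: beta_segment_lt0.
have := @connected_component_path _ _ SO (fun t => refl_mx (seg t) *m refl_mx y).
rewrite /seg subrr subr0 !scale0r !scale1r addr0 add0r refl_mxK ?lt_eqF //.
apply=> t /seg_lt0 st; split; first by apply: refl_mx2_SO; rewrite lt_eqF.
apply: continuous_mulmx; last exact: cst_continuous.
apply: continuous_refl_mx; last by rewrite lt_eqF.
apply: continuousD; apply: continuousZr_tmp => //.
by apply: continuousB; [exact: cst_continuous|].
Qed.

Lemma refl_mx_onto_axis u j : j != ord0 -> b u u < 0 ->
  exists2 a, b a a < 0 & exists t, refl_mx a *m u = t *: delta_mx j 0.
Proof.
move=> j0 uu; set k := Num.sqrt (- b u u).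
have kk : k ^+ 2 = - b u u by rewrite sqr_sqrtr // oppr_ge0 ltW.
have k0 : 0 <= k := sqrtr_ge0 _.
pose s : R := if u j 0 <= 0 then 1 else -1.
have ss : s * s = 1 by rewrite /s; case: ifP; rewrite ?mulrNN mulr1.
have su : s * u j 0 <= 0.
  by rewrite /s; case: ifPn => [|/negP/negP]; rewrite ?mul1r // -ltNge mulN1r oppr_le0 => /ltW.
pose c := (s * k) *: (delta_mx j 0 : vec).
have bc : b c c = b u u.
  rewrite betaZl betaZr beta_delta msign_spatial // -[b u u]opprK -kk expr2.
  by transitivity (- (s * s) * (k * k)); [ring|rewrite ss mulN1r].
have buc : b u c = - (s * k * u j 0).
  by rewrite betaZr beta_delta_r msign_spatial //; ring.
have ucuc : b (u - c) (u - c) < 0.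
  by rewrite betaBB bc buc; have := mulr_ge0_le0 k0 su; nra.
exists (u - c) => //; exists (s * k).
by apply: refl_mx_swap; rewrite ?bc // lt_eqF.
Qed.

Definition rescale_space (a m : R) v : vec :=
  \col_i (if i == ord0 then a else m * v i 0).

Lemma beta_rescale_space a m a' m' v :
  b (rescale_space a m v) (rescale_space a' m' v) =
  a * a' - m * m' * (v ord0 0 ^+ 2 - b v v).
Proof.
rewrite [b v v]beta_recl expr2 opprB addrCA subrr addr0 mulr_sumr.
rewrite beta_recl !mxE eqxx; congr (_ - _).
by apply: eq_bigr => i _; rewrite !mxE lift_eqF; ring.
Qed.

Lemma lower_time_coord v j k : j != ord0 -> 0 < k -> v j 0 = 0 ->
  b v v < k ^+ 2 ->
  exists w, [/\ w j 0 = 0, b w w = b v v, `|w ord0 0| < k &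
                w = v \/ b (v - w) (v - w) < 0].
Proof.
move=> j0 k0 vj vk.
have [|ka] := ltP `|v ord0 0| k; first by exists v; split=> //; left.
(* Otherwise take time coordinate +-c and scale the spatial part of v by -m, with
   m fitted to beta(w, w) = beta(v, v); then
   beta(v - w, v - w) = 2 B - 2 c |v_0| - 2 m (v_0^2 - B) < 0. *)
set a := v ord0 0 in ka *; set B := b v v in vk *.
have aa : a ^+ 2 = `|a| ^+ 2 by rewrite real_normK ?num_real.
have P0 : 0 < a ^+ 2 - B.
  rewrite aa subr_gt0; apply: (lt_le_trans vk).
  by rewrite lerXn2r // nnegrE ltW.
have [c /andP[c0 ck] Bc] := exists_pos_lt_sqr_ge k0 vk.
pose m := Num.sqrt ((c ^+ 2 - B) / (a ^+ 2 - B)).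
have m0 : 0 <= m := sqrtr_ge0 _.
have mm : m ^+ 2 * (a ^+ 2 - B) = c ^+ 2 - B.
  rewrite sqr_sqrtr ?divfK ?(lt0r_neq0 P0) //.
  by apply: divr_ge0; [rewrite subr_ge0|exact: ltW].
pose s := Num.sg a.
have a0 : a != 0 by rewrite -normr_gt0; apply: lt_le_trans ka.
have ss : s ^+ 2 = 1 by rewrite sqr_sg a0.
have sa : s * a = `|a| by rewrite normrEsg.
exists (rescale_space (s * c) (- m) v); split.
- by rewrite mxE (negbTE j0) vj mulr0.
- rewrite beta_rescale_space -/B -/a.
  transitivity (s ^+ 2 * c ^+ 2 - m ^+ 2 * (a ^+ 2 - B)); first by ring.
  by rewrite ss mm; ring.
- by rewrite mxE eqxx normrM normr_sg a0 mul1r gtr0_norm.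
right; rewrite (_ : v - _ = rescale_space (a - s * c) (1 + m) v); last first.
  by apply/colP => i; rewrite !mxE; case: eqP => [->|_] //; ring.
rewrite beta_rescale_space -/B -/a.
have -> : (a - s * c) * (a - s * c) - (1 + m) * (1 + m) * (a ^+ 2 - B) =
    2 * B - 2 * c * (s * a) - 2 * m * (a ^+ 2 - B) + (s ^+ 2 - 1) * c ^+ 2
    - (m ^+ 2 * (a ^+ 2 - B) - (c ^+ 2 - B)) by ring.
rewrite ss mm sa !subrr mul0r addr0 subr0.
have : c * c < c * `|a| by rewrite ltr_pM2l //; exact: lt_le_trans ka.
have : 0 <= m * (a ^+ 2 - B) by rewrite mulr_ge0 // ltW.
by rewrite expr2 in Bc; lra.
Qed.

End Lorentz.

Section Wedges.
Variables (R : realType) (n : nat).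
Local Notation vec := 'cV[R]_n.+2.
Local Notation b := (beta R n.+1).
Local Notation SO := (SO1d R n.+1).
Local Notation Wp := (Wplus R n.+1).
Local Notation Wpairs := (Wp `*` negset Wp).
Local Notation i1 := (inord 1 : 'I_n.+2).
Local Notation e1 := (delta_mx i1 0 : vec).
Implicit Types (x y z p q : vec).

Lemma i1_neq0 : i1 != ord0.
Proof. by rewrite -val_eqE /= inordK. Qed.

Lemma in_Wpairs p q : Wpairs (p, q) <-> Wp p /\ Wp (- q).
Proof.
split=> [[/= Wpp [z Wz <-]]|[Wpp Wq]]; first by rewrite opprK.
by split=> //; exists (- q); rewrite ?opprK.
Qed.

Lemma beta_le_plane x : b x x <= x ord0 0 ^+ 2 - x i1 0 ^+ 2.
Proof.
rewrite beta_recl (bigD1 ord0) //= !expr2.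
rewrite (_ : lift ord0 ord0 = i1); last by apply: val_inj; rewrite /= inordK.
suff : 0 <= \sum_(i < n.+1 | i != ord0) x (lift ord0 i) 0 * x (lift ord0 i) 0 by lra.
by apply: sumr_ge0 => i _; rewrite -expr2 sqr_ge0.
Qed.

Lemma Wplus_add_spacelike p q : Wp p -> Wp q -> b (p + q) (p + q) < 0.
Proof.
move=> [_ Wpp] [_ Wqq]; apply: le_lt_trans (beta_le_plane _) _.
rewrite !mxE subr_lt0.
have : `|p ord0 0 + q ord0 0| < p i1 0 + q i1 0.
  exact: le_lt_trans (ler_normD _ _) (ltrD Wpp Wqq).
rewrite ltr_norml => /andP[? ?]; nra.
Qed.

Lemma pair_orbit_sub_spacelike (G : set 'M[R]_n.+2) :
  G `<=` SO -> pair_orbit G Wpairs `<=` spacelike_pairs R n.+1.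
Proof.
move=> GSO [x y] [g [/GSO[_ bg] [[p q] /in_Wpairs[Wpp Wq] [-> ->]]]].
split; [|split] => /=.
- by rewrite /dS /= bg; case: Wpp.
- by rewrite /dS /= bg -[q]opprK betaNl betaNr opprK; case: Wq.
- by rewrite -mulmxBr bg -[q]opprK opprK; exact: Wplus_add_spacelike.
Qed.

Lemma pair_orbit_wedges :
  pair_orbit SO Wpairs = \bigcup_(W in wedges R n.+1) (W `*` negset W).
Proof.
apply/seteqP; split=> [[x y] [g [SOg [[p q] [/= Wpp [z Wz <-]] [-> ->]]]]|].
  exists (actset g Wp); first by exists g.
  by split=> /=; [exists p|exists (g *m z); [exists z|rewrite mulmxN]].
move=> [x y] [W [g SOg ->]] [/= [p Wpp <-] [_ [q Wq <-] <-]].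
exists g; split=> //; exists (p, - q); first by split=> //; exists q.
by rewrite /= mulmxN.
Qed.

Lemma pair_orbit_intro (G : set 'M[R]_n.+2) g h x y :
  G g -> g *m h = 1%:M -> Wpairs (h *m x, h *m y) -> pair_orbit G Wpairs (x, y).
Proof.
move=> Gg gh Wh; exists g; split=> //; exists (h *m x, h *m y) => //.
by rewrite /= !mulmxA gh !mul1mx.
Qed.

Lemma Wpairs_axis p q t : dS R n.+1 p -> dS R n.+1 q ->
  p - q = t *: e1 -> (p + q) i1 0 = 0 ->
  `|(p + q) ord0 0| < `|t| -> Wpairs (p, q) \/ Wpairs (- p, - q).
Proof.
move=> dp dq pq; rewrite !mxE => s1 s0.
have := congr1 (fun z => z ord0 0) pq; have := congr1 (fun z => z i1 0) pq.
rewrite !mxE eqxx eq_sym (negbTE i1_neq0) mulr1 mulr0 => d1 d0.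
have dN z : dS R n.+1 (- z) = dS R n.+1 z by rewrite /dS /= betaNl betaNr opprK.
rewrite !in_Wpairs opprK; have [t0|t0] := ltP 0 t; [left|right].
- move: s0; rewrite (gtr0_norm t0) ltr_norml => /andP[? ?].
  by do !split; rewrite ?dN ?mxE ?normrN // ltr_norml; apply/andP; split; lra.
- move: s0; rewrite (ler0_norm t0) ltr_norml => /andP[? ?].
  by do !split; rewrite ?dN ?mxE ?normrN // ltr_norml; apply/andP; split; lra.
Qed.

Lemma Wplus_flip j z : j != i1 -> Wp (- z) ->
  Wp (refl_mx e1 *m (refl_mx (delta_mx j 0) *m z)).
Proof.
move=> j1 [dz Wz]; split.
  move: dz; rewrite /dS /= !refl_mx_beta ?beta_delta ?msign_neq0 //.
  by rewrite betaNl betaNr opprK.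
rewrite !refl_mx_deltaE eqxx eq_sym (negbTE i1_neq0) [inord 1 == j]eq_sym (negbTE j1).
rewrite !mxE in Wz *.
by rewrite normrN in Wz; case: (ord0 == j); rewrite ?normrN.
Qed.

Lemma spacelike_pair_normal_form x y : dS R n.+1 x -> dS R n.+1 y ->
  b (x - y) (x - y) < 0 ->
  exists a c h, [/\ b a a < 0, b c c < 0, h = refl_mx c *m refl_mx a &
    Wpairs (h *m x, h *m y) \/ Wpairs (- (h *m x), - (h *m y))].
Proof.
move=> dx dy uu; set u := x - y in uu; set v := x + y.
have [a aa [t au]] := refl_mx_onto_axis i1_neq0 uu.
have aa0 : b a a != 0 by rewrite lt_eqF.
have tt : b u u = - t ^+ 2.
  by rewrite -(refl_mx_beta _ _ aa0) au betaZl betaZr beta_delta msign_spatial ?i1_neq0 //; ring.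
have t0 : 0 < `|t|.
  by rewrite normr_gt0; apply: contraTneq uu => t0; rewrite tt t0 expr0n oppr0 ltxx.
have buv : b u v = 0.
  by rewrite betaBl !betaDr dx dy (betaC y x); ring.
pose v1 := refl_mx a *m v.
have v1_1 : v1 i1 0 = 0.
  move: buv; rewrite -(refl_mx_beta _ _ aa0) au betaZl beta_delta_l msign_spatial ?i1_neq0 //.
  by move/eqP; rewrite mulN1r mulrN oppr_eq0 mulf_eq0 -normr_eq0 (gt_eqF t0) => /eqP.
have v1v1 : b v1 v1 < `|t| ^+ 2.
  rewrite refl_mx_beta // real_normK ?num_real //.
  suff -> : b v v = - 4 - b u u by rewrite tt; lra.
  by rewrite /u /v betaBB !betaDl !betaDr dx dy (betaC y x); ring.
have [c cc [t' [tt' ct v1c1 v1c0]]] : exists2 c : vec, b c c < 0 & exists t',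
    [/\ `|t'| = `|t|, refl_mx c *m (t *: e1) = t' *: e1,
        (refl_mx c *m v1) i1 0 = 0 & `|(refl_mx c *m v1) ord0 0| < `|t|].
  have [w [w1 ww w0 [wv|v1w]]] := lower_time_coord i1_neq0 t0 v1_1 v1v1.
    have e1v1 : b e1 v1 = 0 by rewrite beta_delta_l v1_1 mulr0.
    exists e1; first exact: beta_delta_lt0 i1_neq0.
    exists (- t); rewrite (refl_mx_fix e1v1) -wv; split => //; first by rewrite normrN.
    by rewrite -scalemxAr refl_mx_self ?beta_delta ?msign_neq0 // scalerN scaleNr.
  exists (v1 - w) => //; exists t; split => //; last by rewrite refl_mx_swap ?lt_eqF.
    apply: refl_mx_fix; rewrite betaZr betaBl !beta_delta_r v1_1 w1; ring.
  by rewrite refl_mx_swap ?lt_eqF.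
exists a, c, (refl_mx c *m refl_mx a); split=> //.
have dh z : dS R n.+1 z -> dS R n.+1 (refl_mx c *m refl_mx a *m z).
  by rewrite /dS /= -!mulmxA !refl_mx_beta ?lt_eqF.
apply: (Wpairs_axis (t := t')) (dh _ dx) (dh _ dy) _ _ _.
- by rewrite -mulmxBr -mulmxA -/u au.
- by rewrite -mulmxDr -mulmxA; exact: v1c1.
- by rewrite -mulmxDr -mulmxA tt'; exact: v1c0.
Qed.

Lemma spacelike_pairs_sub_orbit (G : set 'M[R]_n.+2) j : j != i1 ->
  (forall g h, G g -> G h -> G (g *m h)) ->
  (forall a c, b a a < 0 -> b c c < 0 -> G (refl_mx a *m refl_mx c)) ->
  G (refl_mx (delta_mx j 0) *m refl_mx e1) ->
  spacelike_pairs R n.+1 `<=` pair_orbit G Wpairs.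
Proof.
move=> j1 GM G2 Gj [x y] [/= dx [dy xy]].
have [a [c [_ [aa cc -> [Wh|Wh]]]]] := spacelike_pair_normal_form dx dy xy.
  apply: (pair_orbit_intro (G2 _ _ aa cc) _ Wh).
  by rewrite -!mulmxA refl_mxKl ?refl_mxK ?lt_eqF.
pose flip := refl_mx e1 *m refl_mx (delta_mx j 0).
apply: (pair_orbit_intro (h := flip *m (refl_mx c *m refl_mx a)) (GM _ _ (G2 _ _ aa cc) Gj)).
  by rewrite -!mulmxA !refl_mxKl ?refl_mxK ?beta_delta ?msign_neq0 ?lt_eqF.
move/in_Wpairs: Wh => [Wx Wy]; apply/in_Wpairs; rewrite -!mulmxA in Wx Wy *.
split; first exact: Wplus_flip.
by have := Wplus_flip j1 Wy; rewrite !mulmxN.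
Qed.

End Wedges.

Theorem mainTheorem11 (R : realType) (d : nat) (hd : (1 <= d)%N) :
  spacelike_pairs R d = pair_orbit (SO1d R d) (Wplus R d `*` negset (Wplus R d))
  /\ pair_orbit (SO1d R d) (Wplus R d `*` negset (Wplus R d))
     = \bigcup_(W in wedges R d) (W `*` negset W)
  /\ ((1 < d)%N ->
      spacelike_pairs R d = pair_orbit (SO1d_e R d) (Wplus R d `*` negset (Wplus R d))).
Proof.
case: d hd => [//|n] _; split; [|split; first exact: pair_orbit_wedges].
  apply/seteqP; split; last exact: pair_orbit_sub_spacelike.
  apply: (@spacelike_pairs_sub_orbit _ _ _ ord0); first by rewrite eq_sym i1_neq0.
  - exact: SO1d_mul.
  - by move=> a c aa cc; apply: refl_mx2_SO; rewrite lt_eqF.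
  - by apply: refl_mx2_SO; rewrite beta_delta msign_neq0.
move=> n0; apply/seteqP; split; last first.
  by apply: pair_orbit_sub_spacelike; exact: connected_component_sub.
have j0 : (inord 2 : 'I_n.+2) != ord0 by rewrite -val_eqE /= inordK.
apply: (@spacelike_pairs_sub_orbit _ _ _ (inord 2)).
- by rewrite -val_eqE /= !inordK.
- by move=> g h; apply: connected_component_mulmx; [exact: SO1d1|exact: SO1d_mul].
- exact: refl_mx2_SOe.
- by apply: refl_mx2_SOe; apply: beta_delta_lt0; [exact: j0|exact: i1_neq0].
Qed.
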